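(* Let $K$ be a finite field and $R_2=K[x_1,x_2,\ldots]/(x_1^2,x_2^2,\ x_i-x_{i+2}^2 \mid i\geqslant 1)$. Then $R_2$ has exactly one prime ideal $\mathfrak m$, this ideal satisfies $\mathfrak m^2=\mathfrak m\neq 0$ (so every prime ideal of $R_2$ has avoidance), but $R_2$ is not an avoidance ring.
   Context: All rings are commutative with $1\neq 0$. An ideal $I$ of a ring $R$ has avoidance if whenever $I_1,\ldots,I_n$ are finitely many ideals of $R$ with $I\subseteq\bigcup_{k=1}^n I_k$, then $I\subseteq I_k$ for some $k$. A ring is an avoidance ring if every ideal of it has avoidance. *)

From mathcomp Require Import all_boot all_algebra all_field.
Set Implicit Arguments. Unset Strict Implicit. Unset Printing Implicit Defensive.
Import GRing.Theory.
Local Open Scope ring_scope.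

Definition is_ideal (R : comNzRingType) (I : R -> Prop) : Prop :=
  I 0 /\ (forall a b, I a -> I b -> I (a + b)) /\ (forall r a, I a -> I (r * a)).

Definition is_prime_ideal (R : comNzRingType) (I : R -> Prop) : Prop :=
  is_ideal I /\ ~ I 1 /\ (forall a b, I (a * b) -> I a \/ I b).

Definition ideal_mul (R : comNzRingType) (I J : R -> Prop) : R -> Prop :=
  fun x => exists (n : nat) (a b : 'I_n -> R),
    (forall i, I (a i) /\ J (b i)) /\ x = \sum_(i < n) a i * b i.

Definition has_avoidance (R : comNzRingType) (I : R -> Prop) : Prop :=
  forall (n : nat) (J : 'I_n -> R -> Prop),
    (forall k, is_ideal (J k)) ->
    (forall x, I x -> exists k, J k x) ->
    exists k, forall x, I x -> J k x.

Definition avoidance_ring (R : comNzRingType) : Prop :=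
  forall I : R -> Prop, is_ideal I -> has_avoidance I.

Definition is_alg_hom (K : fieldType) (A B : comAlgType K) (f : A -> B) : Prop :=
  (forall a b, f (a + b) = f a + f b) /\ (forall a b, f (a * b) = f a * f b) /\
  f 1 = 1 /\ (forall (k : K) a, f (k *: a) = k *: f a).

(* Relations defining R_2, with x_{i+1} written as x i (0-based indexing):
   x_1^2 = 0, x_2^2 = 0, x_i = x_{i+2}^2 for i >= 1. *)
Definition R2_relations (K : fieldType) (S : comAlgType K) (y : nat -> S) : Prop :=
  y 0%N ^+ 2 = 0 /\ y 1%N ^+ 2 = 0 /\ (forall i : nat, y i = y i.+2 ^+ 2).

(* (R, x) is the commutative K-algebra K[x_1,x_2,...]/(x_1^2, x_2^2, x_i - x_{i+2}^2),
   characterized by its universal property as a presented K-algebra. *)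
Definition is_R2 (K : fieldType) (R : comAlgType K) (x : nat -> R) : Prop :=
  R2_relations x /\
  forall (S : comAlgType K) (y : nat -> S), R2_relations y ->
    exists f : R -> S, is_alg_hom f /\ (forall i, f (x i) = y i) /\
      forall g : R -> S, is_alg_hom g -> (forall i, g (x i) = y i) ->
        forall r, g r = f r.

(* Every element of R2 is a scalar plus an element of the ideal m generated by
   the x_i, and m is the increasing union of the ideals (x_{2N}, x_{2N+1}), whose
   generators are nilpotent.  Hence m is the only prime ideal and lies in the
   Jacobson radical, and m = m^2 because x_i = x_{i+2}^2.
   Avoidance of m: by a lemma of Neumann type on coverings by finitely many
   cosets, a covering of m by ideals J_1, ..., J_n contained in m forces
   m <= J_k + (x_{2N}, x_{2N+1}) for some k and N; since x_{2N} = x_{2N+2}^2 and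
   x_{2N+1} = x_{2N+3}^2, Nakayama's argument then yields m <= J_k.
   Failure of avoidance: over a finite field, (x_1, x_2) is covered by the finitely
   many ideals R (a x_1 + b x_2) + m x_1 + m x_2, and none of them contains both
   x_1 and x_2, because x_1 and x_2 are linearly independent modulo m (x_1, x_2).
   The independence is read off in the monoid algebra of dyadic exponents in
   [0, 2), where x_{2j+1} or x_{2j+2} is sent to t^(2^-j) and the others to 0. *)

From HB Require Import structures.
From mathcomp Require Import all_boot all_order all_algebra.
From mathcomp Require Import boolp ring zify finmap.
From mathcomp.multinomials Require Import monalg.
Import Order.TTheory GRing.Theory Num.Theory.
Local Open Scope ring_scope.
Set Implicit Arguments. Unset Strict Implicit. Unset Printing Implicit Defensive.

Lemma alg_hom0 (K : fieldType) (A B : comAlgType K) (f : A -> B) :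
  is_alg_hom f -> f 0 = 0.
Proof. by case=> fD _; apply: (addrI (f 0)); rewrite -fD !addr0. Qed.

Lemma alg_hom_comp (K : fieldType) (A B C : comAlgType K) (f : A -> B) (g : B -> C) :
  is_alg_hom f -> is_alg_hom g -> is_alg_hom (fun a => g (f a)).
Proof.
move=> [fD [fM [f1 fZ]]] [gD [gM [g1 gZ]]].
by split; [|split; [|split]] => *; rewrite ?fD ?gD ?fM ?gM ?f1 ?g1 ?fZ ?gZ.
Qed.

Section IdealTheory.
Variables (R : comNzRingType) (I : R -> Prop).
Hypothesis I_ideal : is_ideal I.

Lemma is_ideal0 : I 0. Proof. by case: I_ideal. Qed.

Lemma is_idealD a b : I a -> I b -> I (a + b).
Proof. by case: I_ideal => _ [+ _]; apply. Qed.

Lemma is_idealMl r a : I a -> I (r * a).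
Proof. by case: I_ideal => _ [_]; apply. Qed.

Lemma is_idealMr r a : I a -> I (a * r).
Proof. by rewrite mulrC; apply: is_idealMl. Qed.

Lemma is_idealN a : I a -> I (- a).
Proof. by rewrite -mulN1r; apply: is_idealMl. Qed.

Lemma is_idealB a b : I a -> I b -> I (a - b).
Proof. by move=> Ia Ib; apply: is_idealD Ia (is_idealN Ib). Qed.

Lemma is_ideal_sum n (F : 'I_n -> R) : (forall i, I (F i)) -> I (\sum_(i < n) F i).
Proof. by move=> IF; apply: (big_ind I is_ideal0 is_idealD) => i _; apply: IF. Qed.

End IdealTheory.

Lemma is_idealZ (K : fieldType) (A : comAlgType K) (I : A -> Prop) (c : K) a :
  is_ideal I -> I a -> I (c *: a).
Proof. by move=> I_ideal Ia; rewrite -mulr_algl; apply: is_idealMl. Qed.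

Lemma is_ideal_scale1 (K : fieldType) (A : comAlgType K) (I : A -> Prop) (c : K) :
  is_ideal I -> ~ I 1 -> I (c *: 1) -> c = 0.
Proof.
move=> I_ideal I1 Ic; apply: contra_notP I1 => /eqP c_neq0.
have -> : 1 = c^-1 *: 1 * (c *: 1 : A) by rewrite -scalerAl mul1r scalerA mulVf ?scale1r.
exact: is_idealMl.
Qed.

Lemma has_avoidance_ext (R : comNzRingType) (I I' : R -> Prop) :
  (forall r, I r <-> I' r) -> has_avoidance I -> has_avoidance I'.
Proof.
move=> II' avI n J J_ideal cover.
have [k Jk] := avI n J J_ideal (fun r Ir => cover r (proj1 (II' r) Ir)).
by exists k => r /II'; apply: Jk.
Qed.

Section Nilpotent.
Variable R : comNzRingType.

Lemma expr_eq0_leq (a : R) m k : a ^+ m = 0 -> (m <= k)%N -> a ^+ k = 0.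
Proof. by move=> am0 /subnK <-; rewrite exprD am0 mulr0. Qed.

Lemma nilpotentD (a b : R) m n :
  a ^+ m = 0 -> b ^+ n = 0 -> (a + b) ^+ (m + n) = 0.
Proof.
move=> am0 bn0; rewrite exprDn big1 // => i _.
have [ni|] := leqP n i; first by rewrite (expr_eq0_leq bn0 ni) mulr0 mul0rn.
by move=> ltin; rewrite (@expr_eq0_leq a m) ?mul0r ?mul0rn //; have := ltn_ord i; lia.
Qed.

Lemma nilpotent_subr1_unit (w : R) k : w ^+ k = 0 -> exists s, s * (1 - w) = 1.
Proof.
move=> wk0; exists (\sum_(i < k) w ^+ i).
by rewrite mulrC -opprB mulNr -subrX1 wk0 sub0r opprK.
Qed.

End Nilpotent.


Section CosetCover.
Variables (R : comNzRingType) (M : R -> Prop) (L : nat -> R -> Prop).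
Hypothesis M_ideal : is_ideal M.
Hypothesis L_mono : forall N N' r, (N <= N')%N -> L N r -> L N' r.
Hypothesis M_sub_L : forall r, M r -> exists N, L N r.

Definition sub_L_add N (J : R -> Prop) := forall r, M r -> exists l, L N l /\ J (r - l).

Lemma seq_sub_L (s : seq R) : exists N, forall t, t \in s -> M t -> L N t.
Proof.
elim: s => [|t s [N LN]]; first by exists 0%N.
have [/M_sub_L [N' LN']|not_Mt] := pselect (M t).
  exists (maxn N N') => t'; rewrite inE => /predU1P [-> _|st' Mt'].
    exact: L_mono (leq_maxr _ _) LN'.
  exact: L_mono (leq_maxl _ _) (LN _ st' Mt').
by exists N => t'; rewrite inE => /predU1P [-> //|st' Mt']; apply: LN.
Qed.

Lemma finite_cosets_sub_L_add (J : R -> Prop) (T : seq R) : (forall r, J r -> M r) ->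
  (forall r, M r -> exists2 t, t \in T & J (r - t)) -> exists N, sub_L_add N J.
Proof.
move=> JM cover; have [N LN] := seq_sub_L T.
exists N => r Mr; have [t Tt Jrt] := cover r Mr.
have Mt : M t by rewrite -(subKr r t); apply: is_idealB => //; apply: JM.
by exists t; split => //; apply: LN.
Qed.

Lemma coset_cover n (J : nat -> R -> Prop) (T : nat -> seq R) :
  (forall i, (i < n)%N -> is_ideal (J i)) ->
  (forall i r, (i < n)%N -> J i r -> M r) ->
  (forall r, M r -> exists i, (i < n)%N /\ exists2 t, t \in T i & J i (r - t)) ->
  exists i, (i < n)%N /\ exists N, sub_L_add N (J i).
Proof.
elim: n J T => [|n IHn] J T J_ideal JM cover.
  by have [i []] := cover 0 (is_ideal0 M_ideal).
have [[N JnN]|Jn_small] := pselect (exists N, sub_L_add N (J n)).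
  by exists n; split=> //; exists N.
(* Otherwise some u in M avoids every coset of J n, and the cosets t + J n
   are covered by the remaining ideals, translated by the elements t + t' - u. *)
have [u [Mu uT]] : exists u, M u /\ forall t, t \in T n -> ~ J n (u - t).
  apply: contrapT => no_u; apply: Jn_small; apply: (finite_cosets_sub_L_add (T := T n)) => [|r Mr].
    by move=> r; apply: JM.
  apply: contrapT => no_t; apply: no_u; exists r; split=> // t Tt Jrt.
  by apply: no_t; exists t.
pose T' i := T i ++ [seq t + t' - u | t <- T n, t' <- T i].
have [i [ltin LiN]] : exists i, (i < n)%N /\ exists N, sub_L_add N (J i).
  apply: (IHn J T') => [i /ltnW|i r /ltnW|r Mr]; [exact: J_ideal|exact: JM|].
  have [i [ltin1 [t Tt Jrt]]] := cover r Mr.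
  have [ltin|] := ltnP i n.
    by exists i; split => //; exists t => //; rewrite mem_cat Tt.
  move=> lein; have ein : i = n by lia.
  subst i; have Murt : M (u + (r - t)) by apply: is_idealD (JM n _ _ Jrt).
  have [i' [lti'n1 [t' Tt' Jt']]] := cover _ Murt.
  have [lti'n|] := ltnP i' n; last first.
    move=> lei'; have ei' : i' = n by lia.
    subst i'; exfalso; apply: (uT t' Tt').
    have -> : u - t' = u + (r - t) - t' - (r - t) by ring.
    exact: (is_idealB (J_ideal n (ltnSn n)) Jt' Jrt).
  exists i'; split => //; exists (t + t' - u).
    by rewrite mem_cat; apply/orP; right; apply: (allpairs_f (fun t t' => t + t' - u)).
  by have -> : r - (t + t' - u) = u + (r - t) - t' by ring.
by exists i; split => //; apply: ltnW.
Qed.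

End CosetCover.

Lemma nakayama_pair (R : comNzRingType) (M J : R -> Prop) (u v a b c e : R) :
  is_ideal M -> is_ideal J -> (forall w, M w -> exists s, s * (1 - w) = 1) ->
  M u -> M v -> J (u - (a * u ^+ 2 + b * v ^+ 2)) -> J (v - (c * u ^+ 2 + e * v ^+ 2)) ->
  J u /\ J v.
Proof.
move=> M_ideal J_ideal M_jacobson Mu Mv Ju Jv.
(* 1 - w is the determinant of the system u = (a u) u + (b v) v,
   v = (c u) u + (e v) v modulo J; its adjugate puts (1 - w) u, (1 - w) v in J. *)
pose w := u * (a - a * e * v + b * c * v) + e * v.
have [s sw1] : exists s, s * (1 - w) = 1.
  apply: M_jacobson; apply: (is_idealD M_ideal).
    exact: (is_idealMr M_ideal).
  exact: (is_idealMl M_ideal).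
set du := u - _ in Ju; set dv := v - _ in Jv.
have Ju' : J ((1 - e * v) * du + b * v * dv).
  by apply: (is_idealD J_ideal); apply: (is_idealMl J_ideal).
have Jv' : J ((1 - a * u) * dv + c * u * du).
  by apply: (is_idealD J_ideal); apply: (is_idealMl J_ideal).
split.
  have -> : u = s * ((1 - w) * u) by rewrite mulrA sw1 mul1r.
  have -> : (1 - w) * u = (1 - e * v) * du + b * v * dv by rewrite /du /dv /w; ring.
  exact: (is_idealMl J_ideal _ Ju').
have -> : v = s * ((1 - w) * v) by rewrite mulrA sw1 mul1r.
have -> : (1 - w) * v = (1 - a * u) * dv + c * u * du by rewrite /du /dv /w; ring.
exact: (is_idealMl J_ideal _ Jv').
Qed.

(* Monomials t^q of the model algebra, for rationals 0 <= q < 2; None is the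
   zero monomial, which absorbs every product of total degree at least 2. *)
Definition trunc_pred : pred rat := fun q => (0 <= q) && (q < 2).
Definition trunc := {q : rat | trunc_pred q}.
Definition tmon := option trunc.
HB.instance Definition _ := Choice.on tmon.

Definition tmon1 : tmon := Some (exist _ 0 (erefl : trunc_pred 0)).
Definition tmul (a b : tmon) : tmon :=
  match a, b with Some a, Some b => insub (val a + val b) | _, _ => None end.

Lemma trunc_ge0 (a : trunc) : 0 <= val a.
Proof. by case: a => q /= /andP[]. Qed.

Lemma tmulC : commutative tmul.
Proof. by case=> [a|] [b|] //=; rewrite addrC. Qed.

Lemma tmul0m : left_zero None tmul. Proof. by []. Qed.
Lemma tmulm0 : right_zero None tmul. Proof. by case. Qed.

Lemma tmul3E (a b c : trunc) :
  tmul (tmul (Some a) (Some b)) (Some c) = insub (val a + val b + val c).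
Proof.
rewrite /=; case: insubP => [d _ <-|ab_out] //=.
rewrite insubN //; apply: contra ab_out => /andP[_ abc_lt2].
rewrite /trunc_pred addr_ge0 ?trunc_ge0 //=; apply: le_lt_trans abc_lt2.
by rewrite lerDl trunc_ge0.
Qed.

Lemma tmulA : associative tmul.
Proof.
case=> [a|] [b|] [c|]; rewrite ?tmul0m ?tmulm0 //.
by rewrite tmulC !tmul3E addrC addrA.
Qed.

Lemma tmul1m : left_id tmon1 tmul.
Proof. by case=> [[q qP]|] //=; rewrite add0r insubT. Qed.

Lemma tmulm1 : right_id tmon1 tmul.
Proof. by move=> a; rewrite tmulC tmul1m. Qed.

Lemma tmul_eq1 (a b : tmon) : tmul a b = tmon1 -> a = tmon1 /\ b = tmon1.
Proof.
case: a b => [a|] [b|] //=; case: insubP => // d _ dab [] d0.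
have /eqP : val a + val b = 0 by rewrite -dab d0.
rewrite paddr_eq0 ?trunc_ge0 // => /andP[/eqP a0 /eqP b0].
by split; congr Some; apply: val_inj.
Qed.

HB.instance Definition _ := Choice_isMonomialDef.Build tmon tmulA tmul1m tmulm1 tmul_eq1.
HB.instance Definition _ := MonomialDef_isConomialDef.Build tmon tmulC.

Definition dyad (j : nat) : rat := (2 ^+ j)^-1.

Lemma dyadP j : trunc_pred (dyad j).
Proof.
have dyad_gt0 : 0 < dyad j by rewrite invr_gt0 exprn_gt0.
rewrite /trunc_pred ltW //=; apply: le_lt_trans (_ : 1 < 2) => //.
by rewrite invf_le1 ?exprn_gt0 // exprn_ege1.
Qed.

Definition tdyad j : tmon := Some (exist _ (dyad j) (dyadP j)).

Lemma tdyad_neq1 j : tdyad j != tmon1.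
Proof.
apply/eqP => /(congr1 (fun o : tmon => if o is Some d then val d else 1)) /= /eqP.
by rewrite invr_eq0 expf_eq0 pnatr_eq0 andbF.
Qed.

Lemma tmul_tdyadS j : tmul (tdyad j.+1) (tdyad j.+1) = tdyad j.
Proof.
have dyadD : dyad j.+1 + dyad j.+1 = dyad j.
  have two_j : (2 : rat) ^+ j != 0 by rewrite expf_eq0 pnatr_eq0 andbF.
  by rewrite /dyad exprS; field.
by rewrite /= insubT ?dyadD ?dyadP // => dP; congr Some; apply: val_inj.
Qed.

Lemma tmul_tdyad0 : tmul (tdyad 0) (tdyad 0) = None.
Proof. by rewrite /= insubN. Qed.

Lemma tmul_eq_tdyad0 k : (tmul k (tdyad 0) == tdyad 0) = (k == tmon1).
Proof.
apply/eqP/eqP => [|->]; last exact: tmul1m.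
case: k => [a|] //=; case: insubP => // d _ dad [] d1.
have a0 : val a = 0 by apply: (addIr (dyad 0)); rewrite add0r -dad d1.
by congr Some; apply: val_inj.
Qed.

Section TruncModel.
Variable K : fieldType.

Definition tmodel := {malg K[tmon]}.

(* The image of m in the quotient by the ideal spanned by the monomial None. *)
Definition tmono (m : tmon) : tmodel := << m >> - << None >>.

Lemma tmonoM m m' : tmono m * tmono m' = tmono (tmul m m').
Proof.
have UM (k k' : tmon) : (<< k >> : tmodel) * << k' >> = << tmul k k' >>.
  by rewrite malgM_def fgmulUU mulr1.
by rewrite /tmono mulrBl !mulrBr !UM tmulm0 !tmul0m subrr subr0.
Qed.

Lemma tmono_None : tmono None = 0.
Proof. exact: subrr. Qed.

Definition tmodel_gen (b : bool) (i : nat) : tmodel :=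
  if odd i == b then tmono (tdyad i./2) else 0.

Lemma tmodel_gen_rel b : R2_relations (tmodel_gen b).
Proof.
have sqr0 (i : nat) : (i <= 1)%N -> tmodel_gen b i ^+ 2 = 0.
  rewrite /tmodel_gen leq_eqVlt ltnS leqn0 => /orP[] /eqP -> /=; case: ifP;
    by rewrite expr2 ?mul0r // tmonoM tmul_tdyad0 tmono_None.
split; [exact: sqr0|split; [exact: sqr0|move=> i]].
rewrite /tmodel_gen (_ : odd i.+2 = odd i); last by rewrite !oddS negbK.
have -> : i.+2./2 = i./2.+1 by [].
by case: (odd i == b); rewrite expr2 ?mul0r // tmonoM tmul_tdyadS.
Qed.

Definition teps (g : tmodel) : K^o := g@_tmon1.

Lemma teps_alg_hom : is_alg_hom teps.
Proof.
have [tepsM teps1] := @mcoeff1g_is_multiplicative tmon K.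
split; [exact: mcoeffD|split; [exact: tepsM|split; [exact: teps1|]]].
by move=> c g; rewrite /teps mcoeffZ.
Qed.

Lemma teps_tmono_tdyad j : teps (tmono (tdyad j)) = 0.
Proof. by rewrite /teps mcoeffB !mcoeffU1 (negbTE (tdyad_neq1 j)) /= subr0. Qed.

Lemma teps_tmodel_gen b i : teps (tmodel_gen b i) = 0.
Proof. by rewrite /tmodel_gen; case: ifP => _; [exact: teps_tmono_tdyad|exact: mcoeff0]. Qed.

Lemma mcoeff_mul_tmono_tdyad0 (g : tmodel) : (g * tmono (tdyad 0))@_(tdyad 0) = teps g.
Proof.
have coefMU (k : tmon) :
    (g * << k >>)@_(tdyad 0) = \sum_(k1 <- msupp g) g@_k1 *+ (tmul k1 k == tdyad 0).
  rewrite malgM_def fgmulgU raddf_sum; apply: eq_bigr => k1 _.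
  by rewrite /= mcoeffU mulr1 eq_sym.
rewrite /tmono mulrBr mcoeffB !coefMU [X in _ - X]big1 => [|k1 _]; last by rewrite tmulm0.
under eq_bigr do rewrite tmul_eq_tdyad0.
rewrite subr0 [in RHS](monalgE g) /teps raddf_sum; apply: eq_bigr => k _.
by rewrite /= mcoeffU.
Qed.

Lemma tmono_tdyad0_neq0 : tmono (tdyad 0) != 0.
Proof.
apply/eqP => t0_0; have := mcoeff_mul_tmono_tdyad0 1.
have [_ [_ [teps1 _]]] := teps_alg_hom.
by rewrite t0_0 mulr0 mcoeff0 teps1 => /eqP; rewrite eq_sym oner_eq0.
Qed.

End TruncModel.

Section R2.
Variables (K : fieldType) (R : comAlgType K) (x : nat -> R).
Hypothesis x_R2 : is_R2 x.

Lemma R2_rel i : x i = x i.+2 ^+ 2.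
Proof. by case: x_R2 => [[_ [_]]]. Qed.

Definition xideal N (r : R) := exists a b, r = a * x N.*2 + b * x N.*2.+1.

Lemma xideal_ideal N : is_ideal (xideal N).
Proof.
split; first by exists 0, 0; rewrite !mul0r addr0.
split; first by move=> _ _ [a [b ->]] [a' [b' ->]]; exists (a + a'), (b + b'); ring.
by move=> r _ [a [b ->]]; exists (r * a), (r * b); ring.
Qed.

Lemma xidealS N r : xideal N r -> xideal N.+1 r.
Proof.
move=> [a [b ->]]; exists (a * x N.+1.*2), (b * x N.+1.*2.+1).
by rewrite doubleS (R2_rel N.*2) (R2_rel N.*2.+1) !expr2 !mulrA.
Qed.

Lemma xideal_mono N N' r : (N <= N')%N -> xideal N r -> xideal N' r.
Proof.
move=> /subnK <-; elim: (N' - N)%N => [|k IHk] // Nr.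
by rewrite addSn; apply/xidealS/IHk.
Qed.

Definition mideal (r : R) := exists N, xideal N r.

Lemma mideal_ideal : is_ideal mideal.
Proof.
have xI := xideal_ideal; split; first by exists 0%N; apply: is_ideal0.
split; last by move=> r a [N Na]; exists N; apply: (is_idealMl (xI N)).
move=> a b [N Na] [N' Nb]; exists (maxn N N').
apply: (is_idealD (xI _)).
  by apply: xideal_mono Na; rewrite leq_maxl.
by apply: xideal_mono Nb; rewrite leq_maxr.
Qed.

Lemma mideal_x i : mideal (x i).
Proof.
exists i./2; rewrite -[in x i](odd_double_half i) addnC.
by case: (odd i); [exists 0, 1|exists 1, 0]; rewrite ?addn1 ?addn0; ring.
Qed.

Lemma x_nilpotent N (e : bool) : x (N.*2 + e) ^+ (2 ^ N.+1) = 0.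
Proof.
case: x_R2 => [[x0 [x1 _]] _].
elim: N => [|N IHN]; first by case: e.
by rewrite expnS exprM doubleS !addSn -R2_rel.
Qed.

Lemma mideal_nilpotent r : mideal r -> exists k, r ^+ k = 0.
Proof.
move=> [N [a [b ->]]]; exists (2 ^ N.+1 + 2 ^ N.+1)%N.
apply: nilpotentD; rewrite exprMn.
  by have := x_nilpotent N false; rewrite addn0 => ->; rewrite mulr0.
by have := x_nilpotent N true; rewrite addn1 => ->; rewrite mulr0.
Qed.

Lemma mideal_jacobson w : mideal w -> exists s, s * (1 - w) = 1.
Proof. by move=> /mideal_nilpotent [k]; apply: nilpotent_subr1_unit. Qed.

Lemma mideal_not1 : ~ mideal 1.
Proof. by move=> /mideal_nilpotent [k]; rewrite expr1n; apply/eqP/oner_neq0. Qed.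

Lemma mideal_scalar (c : K) : mideal (c *: 1) -> c = 0.
Proof. exact: is_ideal_scale1 mideal_ideal mideal_not1. Qed.

Lemma R2_hom (S : comAlgType K) (y : nat -> S) : R2_relations y ->
  exists f : R -> S, is_alg_hom f /\ forall i, f (x i) = y i.
Proof. by case: x_R2 => _ /[apply] [[f [? [? _]]]]; exists f. Qed.

Definition const_mod_mideal : pred R := fun r => `[< exists c : K, mideal (r - c *: 1) >].

Lemma const_mod_mideal_subalg : GRing.subalg_closed const_mod_mideal.
Proof.
have M := mideal_ideal.
split; first by apply/asboolP; exists 1; rewrite scale1r subrr; apply: (is_ideal0 M).
  move=> a u v /asboolP[c Mu] /asboolP[c' Mv]; apply/asboolP; exists (a * c + c').
  have -> : a *: u + v - (a * c + c') *: 1 = a *: (u - c *: 1) + (v - c' *: 1).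
    by rewrite scalerDl -scalerA scalerBr addrACA opprD.
  by apply: (is_idealD M) => //; apply: is_idealZ.
move=> u v /asboolP[c Mu] /asboolP[c' Mv]; apply/asboolP; exists (c * c').
have -> : u * v - (c * c') *: 1 = (u - c *: 1) * v + c *: (v - c' *: 1).
  by rewrite mulrBl scalerBr -scalerAl mul1r scalerA addrA subrK.
by apply: (is_idealD M); [apply: (is_idealMr M)|apply: is_idealZ].
Qed.

HB.instance Definition _ :=
  GRing.isSubalgClosed.Build K R const_mod_mideal const_mod_mideal_subalg.
Record const_mod_sub :=
  ConstModSub { const_mod_val :> R; const_mod_valP : const_mod_mideal const_mod_val }.
HB.instance Definition _ := [isSub for const_mod_val].
HB.instance Definition _ := [Choice of const_mod_sub by <:].
HB.instance Definition _ := [SubChoice_isSubAlgebra of const_mod_sub by <:].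
Lemma const_mod_sub_mulC : commutative (@GRing.mul const_mod_sub).
Proof. by move=> a b; apply: val_inj; rewrite /= mulrC. Qed.
HB.instance Definition _ :=
  GRing.PzRing_hasCommutativeMul.Build const_mod_sub const_mod_sub_mulC.

(* K + m contains the x_i, so by uniqueness in the universal property the map
   R -> K + m sending x_i to x_i, followed by the inclusion, is the identity. *)
Lemma R2_const_mod_mideal r : exists c : K, mideal (r - c *: 1).
Proof.
have x_sub i : const_mod_mideal (x i).
  by apply/asboolP; exists 0; rewrite scale0r subr0; apply: mideal_x.
pose y i := ConstModSub (x_sub i).
have y_rel : R2_relations y.
  case: x_R2 => [[x0 [x1 xS]] _].
  by split; [|split; [|move=> i]]; apply: val_inj; rewrite /= -expr2 ?x0 ?x1 -?xS.
have [f [f_hom fx]] := R2_hom y_rel.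
have [f0 [_ [_ x_uniq]]] := proj2 x_R2 _ _ (proj1 x_R2).
have val_f_hom : is_alg_hom (fun r => val (f r)).
  case: f_hom => [fD [fM [f1 fZ]]].
  by split; [|split; [|split]] => *;
    rewrite ?fD ?fM ?f1 ?fZ ?rmorphD ?rmorphM ?rmorph1 ?linearZ.
have idR : is_alg_hom (fun r : R => r) by [].
have := const_mod_valP (f r).
rewrite (x_uniq _ val_f_hom (fun i => congr1 val (fx i))).
by rewrite -(x_uniq _ idR (fun i => erefl)) => /asboolP.
Qed.

Section PrimeIdeal.
Variable p : R -> Prop.
Hypothesis p_prime : is_prime_ideal p.

Lemma prime_ideal_x i : p (x i).
Proof.
case: p_prime => p_ideal [_ pM]; case: x_R2 => [[x0 [x1 xS]] _].
have p_sqr a : p (a ^+ 2) -> p a by rewrite expr2 => /pM [].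
suff: p (x i) /\ p (x i.+1) by case.
elim: i => [|i [pxi pxi1]].
  by split; apply: p_sqr; rewrite ?x0 ?x1; apply: (is_ideal0 p_ideal).
by split => //; apply: p_sqr; rewrite -xS.
Qed.

Lemma prime_ideal_eq_mideal r : p r <-> mideal r.
Proof.
case: p_prime => p_ideal [p_not1 _].
have mp a : mideal a -> p a.
  move=> [N [a' [b' ->]]]; apply: (is_idealD p_ideal); apply: (is_idealMl p_ideal).
    exact: prime_ideal_x.
  exact: prime_ideal_x.
split=> [pr|]; last exact: mp.
have [c Mrc] := R2_const_mod_mideal r.
suff c0 : c = 0 by rewrite -[r]subr0 -(scale0r 1) -c0.
apply: (is_ideal_scale1 p_ideal p_not1).
by rewrite -[c *: 1](subKr r); apply: (is_idealB p_ideal) => //; apply: mp.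
Qed.

End PrimeIdeal.

Lemma mideal_prime : is_prime_ideal mideal.
Proof.
have M := mideal_ideal; split; [exact: M|split; [exact: mideal_not1|move=> a b Mab]].
have [c Ma] := R2_const_mod_mideal a; have [c' Mb] := R2_const_mod_mideal b.
have Mcc' : mideal ((c * c') *: 1).
  have -> : (c * c') *: 1 = a * b - ((a - c *: 1) * b + c *: (b - c' *: 1)).
    by rewrite mulrBl scalerBr -scalerAl mul1r scalerA addrA subrK opprB addrC subrK.
  apply: (is_idealB M) => //; apply: (is_idealD M); first exact: (is_idealMr M).
  exact: is_idealZ.
move/mideal_scalar/eqP: Mcc'; rewrite mulf_eq0 => /orP[] /eqP c0.
  by left; rewrite -[a]subr0 -(scale0r 1) -c0.
by right; rewrite -[b]subr0 -(scale0r 1) -c0.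
Qed.

Lemma mideal_mul_self r : ideal_mul mideal mideal r <-> mideal r.
Proof.
have M := mideal_ideal; split.
  move=> [n [a [b [Mab ->]]]]; apply: (is_ideal_sum M) => i.
  by apply: (is_idealMr M); case: (Mab i).
move=> [N [a [b ->]]].
pose u (i : 'I_2) := x (N.+1.*2 + i).
exists 2%N, (fun i => (if val i == 0%N then a else b) * u i), u; split.
  by move=> i; split; [apply: (is_idealMl M)|]; apply: mideal_x.
rewrite !big_ord_recr big_ord0 /= add0r /u /= addn0 addn1.
by rewrite (R2_rel N.*2) (R2_rel N.*2.+1) doubleS !expr2 !mulrA.
Qed.

Lemma x0_neq0 : x 0 <> 0.
Proof.
have [f [f_hom fx]] := R2_hom (tmodel_gen_rel K false).
move=> x0; have := fx 0%N; rewrite x0 alg_hom0 // => /esym/eqP.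
exact/negP/tmono_tdyad0_neq0.
Qed.

Lemma sub_xideal_add_mideal N (J : R -> Prop) : is_ideal J ->
  sub_L_add mideal xideal N J -> forall r, mideal r -> J r.
Proof.
move=> J_ideal mJ.
pose u := x N.+1.*2; pose v := x N.+1.*2.+1.
have [u2 v2] : x N.*2 = u ^+ 2 /\ x N.*2.+1 = v ^+ 2 by rewrite /u /v doubleS -!R2_rel.
have [l1 [[a [b ->]] Ju]] := mJ u (mideal_x _).
have [l2 [[c [e ->]] Jv]] := mJ v (mideal_x _).
rewrite u2 v2 in Ju Jv.
have [Ju' Jv'] :=
  nakayama_pair mideal_ideal J_ideal mideal_jacobson (mideal_x _) (mideal_x _) Ju Jv.
move=> r /mJ [l [[a' [b' el]] Jrl]].
rewrite -(subrK l r); apply: (is_idealD J_ideal) => //.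
by rewrite el u2 v2 !expr2 !mulrA; apply: (is_idealD J_ideal); apply: (is_idealMl J_ideal).
Qed.

Lemma mideal_avoidance : has_avoidance mideal.
Proof.
move=> n J J_ideal cover.
pose J' i r := (exists lt_in : (i < n)%N, J (Ordinal lt_in) r) /\ mideal r.
have J'E i (lt_in : (i < n)%N) r : J' i r -> J (Ordinal lt_in) r.
  by move=> [[lt_in' Jr] _]; rewrite (bool_irrelevance lt_in lt_in').
have J'_ideal i : (i < n)%N -> is_ideal (J' i).
  move=> lt_in; have Ji := J_ideal (Ordinal lt_in); have M := mideal_ideal.
  split; first by split; [exists lt_in; apply: (is_ideal0 Ji)|apply: (is_ideal0 M)].
  split=> [a b Ja Jb|r a Ja]; split; try exists lt_in.
  - by apply: (is_idealD Ji); apply: J'E.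
  - by apply: (is_idealD M); [case: Ja|case: Jb].
  - by apply: (is_idealMl Ji); apply: J'E.
  - by apply: (is_idealMl M); case: Ja.
have [i [lt_in [N mJ']]] :
    exists i, (i < n)%N /\ exists N, sub_L_add mideal xideal N (J' i).
  apply: (coset_cover mideal_ideal xideal_mono _ (T := fun _ => [:: 0])) => //.
  - by move=> i r _ [].
  - move=> r Mr; have [k Jk] := cover r Mr; exists k; split; first exact: ltn_ord.
    exists 0; rewrite ?inE // subr0; split=> //.
    by exists (ltn_ord k); rewrite (_ : Ordinal _ = k) //; apply: val_inj.
exists (Ordinal lt_in) => r Mr.
by apply: J'E; apply: sub_xideal_add_mideal mJ' _ Mr; apply: J'_ideal.
Qed.

Lemma teps_R2_hom (y : nat -> tmodel K) (f : R -> tmodel K) :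
  is_alg_hom f -> (forall i, f (x i) = y i) -> (forall i, teps (y i) = 0) ->
  forall r (c : K), mideal (r - c *: 1) -> teps (f r) = c.
Proof.
move=> f_hom fx teps_y r c Mrc.
have [gD [gM [g1 gZ]]] := alg_hom_comp f_hom (teps_alg_hom K).
have gM0 a : mideal a -> teps (f a) = 0.
  by move=> [N [a' [b' ->]]]; rewrite gD !gM !fx !teps_y !mulr0 addr0.
by rewrite -(subrK (c *: 1) r) gD gZ g1 gM0 // add0r [_ *: _]mulr1.
Qed.

Lemma mideal_x01_independent r0 r1 : r0 * x 0 + r1 * x 1 = 0 -> mideal r0 /\ mideal r1.
Proof.
move=> E; suff coef (b : bool) : mideal (if b then r1 else r0).
  by split; [apply: (coef false)|apply: (coef true)].
(* In the model where x 0 (b = false) or x 1 (b = true) is the monomial t, the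
   coefficient of t in the image of E is the constant term of r0 or r1. *)
have [f [f_hom fx]] := R2_hom (tmodel_gen_rel K b).
have [c Mrc] := R2_const_mod_mideal (if b then r1 else r0).
have := teps_R2_hom f_hom fx (teps_tmodel_gen K b) Mrc.
have := congr1 (fun r => (f r)@_(tdyad 0)) E.
case: (f_hom) => fD [fM _]; rewrite /= fD !fM !fx alg_hom0 // mcoeff0.
clear fx; case: b Mrc => Mrc;
  rewrite /tmodel_gen /= mulr0 ?addr0 ?add0r mcoeff_mul_tmono_tdyad0 => -> c0;
  by rewrite -c0 scale0r subr0 in Mrc.
Qed.

Definition line_ideal (a b : K) (r : R) := exists h s t, mideal s /\ mideal t /\
  r = h * (a *: x 0 + b *: x 1) + s * x 0 + t * x 1.

Lemma line_ideal_ideal a b : is_ideal (line_ideal a b).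
Proof.
have M := mideal_ideal; rewrite /line_ideal; move: (a *: x 0 + b *: x 1) => z.
split.
  by exists 0, 0, 0; split; [|split]; rewrite ?mul0r ?addr0 //; apply: (is_ideal0 M).
split=> [_ _ [h [s [t [Ms [Mt ->]]]]] [h' [s' [t' [Ms' [Mt' ->]]]]]|
         r _ [h [s [t [Ms [Mt ->]]]]]].
  by exists (h + h'), (s + s'), (t + t'); split; [|split]; [exact: (is_idealD M)..|ring].
by exists (r * h), (r * s), (r * t); split; [|split]; [exact: (is_idealMl M)..|ring].
Qed.

Lemma line_ideal_coef (a b g d : K) :
  line_ideal a b (g *: x 0 + d *: x 1) -> exists c, g = c * a /\ d = c * b.
Proof.
move=> [h [s [t [Ms [Mt E]]]]]; have M := mideal_ideal.
have [c Mhc] := R2_const_mod_mideal h; exists c.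
have coef (a' g' : K) s' : mideal s' -> mideal (g' *: 1 - (a' *: h + s')) -> g' = c * a'.
  move=> Ms' Mg'; apply/eqP; rewrite -subr_eq0; apply/eqP/mideal_scalar.
  have -> : (g' - c * a') *: 1 = g' *: 1 - (a' *: h + s') + s' + a' *: (h - c *: 1).
    rewrite scalerBl scalerBr scalerA mulrC.
    by move: (g' *: 1) (a' *: h) ((a' * c) *: 1 : R) => G H C; ring.
  by apply: (is_idealD M); [apply: (is_idealD M)|apply: is_idealZ].
have [M0 M1] : mideal (g *: 1 - (a *: h + s)) /\ mideal (d *: 1 - (b *: h + t)).
  apply: mideal_x01_independent.
  transitivity (g *: x 0 + d *: x 1 - (h * (a *: x 0 + b *: x 1) + s * x 0 + t * x 1)).
    rewrite !mulrBl !mulrDl mulrDr -!scalerAl !mul1r -!scalerAr.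
    by move: (g *: x 0) (d *: x 1) (a *: (h * x 0)) (b *: (h * x 1)) => X Y U V; ring.
  by rewrite E subrr.
by split; [apply: coef Ms M0|apply: coef Mt M1].
Qed.

End R2.

Lemma R2_not_avoidance_ring (K : finFieldType) (R : comAlgType K) (x : nat -> R) :
  is_R2 x -> ~ avoidance_ring R.
Proof.
move=> x_R2 avR; pose ab (k : 'I_#|{: K * K}|) := enum_val k.
have cover r : xideal x 0 r -> exists k, line_ideal x (ab k).1 (ab k).2 r.
  move=> [f [g ->]]; have [cf Mf] := R2_const_mod_mideal x_R2 f.
  have [cg Mg] := R2_const_mod_mideal x_R2 g.
  exists (enum_rank (cf, cg)); rewrite /ab enum_rankK /=.
  exists 1, (f - cf *: 1), (g - cg *: 1); split; [|split] => //.
  rewrite !mulrBl -!scalerAl !mul1r; move: (cf *: x 0) (cg *: x 1) => A B; ring.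
have [k sub] := avR _ (xideal_ideal x 0) _ _ (fun k => line_ideal_ideal x_R2 _ _) cover.
move: (ab k) sub => [a b] /= sub.
have [c [c1 c0]] : exists c, 1 = c * a /\ 0 = c * b.
  apply: (line_ideal_coef x_R2); rewrite scale1r scale0r addr0; apply: sub.
  by exists 1, 0; rewrite mul1r mul0r addr0.
have [c' [c'0 c'1]] : exists c', 0 = c' * a /\ 1 = c' * b.
  apply: (line_ideal_coef x_R2); rewrite scale1r scale0r add0r; apply: sub.
  by exists 0, 1; rewrite mul1r mul0r add0r.
have : (c * a) * (c' * b) = (c * b) * (c' * a) by ring.
by rewrite -c1 -c'1 -c0 -c'0 mulr0 mulr1 => /eqP; rewrite oner_eq0.
Qed.

Theorem mainTheorem11 (K : finFieldType) (R : comAlgType K) (x : nat -> R) :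
  is_R2 x ->
  exists m : R -> Prop,
    is_prime_ideal m /\
    (forall p : R -> Prop, is_prime_ideal p -> forall r, p r <-> m r) /\
    (forall r, ideal_mul m m r <-> m r) /\
    (exists r, m r /\ r <> 0) /\
    (forall p : R -> Prop, is_prime_ideal p -> has_avoidance p) /\
    ~ avoidance_ring R.
Proof.
move=> x_R2; exists (mideal x).
split; first exact: (mideal_prime x_R2).
split; first by move=> p p_prime r; apply: (prime_ideal_eq_mideal x_R2).
split; first exact: (mideal_mul_self x_R2).
split; first by exists (x 0); split; [apply: mideal_x|apply: (x0_neq0 x_R2)].
split; last exact: (R2_not_avoidance_ring x_R2).
move=> p p_prime; apply: has_avoidance_ext (mideal_avoidance x_R2) => r.
by apply: iff_sym; apply: (prime_ideal_eq_mideal x_R2).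
Qed.
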